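(* Let $\alpha,\beta,\gamma>-1$ and $\delta\neq\pm1$. For all $0\le k\le n$ (with the convention that $\mathcal J_{m,j}=0$ unless $0\le j\le m$), $$y\,\mathcal J_{n,k}=\widetilde a_{nk}\mathcal J_{n+1,k}+\widetilde b_{nk}\mathcal J_{n,k}+\widetilde c_{nk}\mathcal J_{n-1,k},$$ $$x\,\mathcal J_{n,k}=\widetilde e_{nk}\mathcal J_{n+1,k-1}+\widetilde f_{nk}\mathcal J_{n+1,k}+\widetilde g_{nk}\mathcal J_{n+1,k+1}+\widetilde r_{nk}\mathcal J_{n,k-1}+\widetilde s_{nk}\mathcal J_{n,k}+\widetilde t_{nk}\mathcal J_{n,k+1}+\widetilde u_{nk}\mathcal J_{n-1,k-1}+\widetilde v_{nk}\mathcal J_{n-1,k}+\widetilde w_{nk}\mathcal J_{n-1,k+1},$$ where, writing $\delta_j=(-1)^j\delta$, $\phi_k=(1-(-1)^k)/2$, $S=\alpha+\beta+\gamma$, $\widetilde\tau_k=\frac{k+\beta\phi_k}{2k+\beta+\gamma}$, $\widetilde\sigma_k=\frac{k+\beta\phi_k+\gamma+1}{2k+\beta+\gamma+2}$, $\widetilde z_n=\frac{(-1)^n-\delta(2n+S+2)}{(2n+S+1)(2n+S+3)}$, and (first case for $n+k$ even, second for $n+k$ odd): $\widetilde a_{nk}=\frac{1+\delta_n}{2n+S+3}\cdot\{n-k+\alpha+1;\ n+k+S+2\}$, $\widetilde c_{nk}=\frac{1+\delta_{n+1}}{2n+S+1}\cdot\{n-k;\ n+k+\beta+\gamma+1\}$,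 $\widetilde e_{nk}=\frac{\widetilde\tau_k(1-\delta_k)(1+\delta_n)}{2n+S+3}\cdot\{n-k+\alpha+1;\ n-k+\alpha+2\}$, $\widetilde g_{nk}=\frac{\widetilde\sigma_k(1+\delta_n)}{(1+\delta_k)(2n+S+3)}\cdot\{n+k+S+3;\ n+k+S+2\}$, $\widetilde r_{nk}=2\widetilde\tau_k\widetilde z_n((-1)^k-\delta)\cdot\{n-k+\alpha+1;\ n+k+\beta+\gamma+1\}$, $\widetilde t_{nk}=\frac{2(-1)^{k+1}\widetilde\sigma_k\widetilde z_n}{1+\delta_k}\cdot\{n-k;\ n+k+S+2\}$, $\widetilde u_{nk}=\frac{\widetilde\tau_k(1-\delta_k)(1-\delta_n)}{2n+S+1}\cdot\{n+k+\beta+\gamma;\ n+k+\beta+\gamma+1\}$, $\widetilde w_{nk}=\frac{\widetilde\sigma_k(1-\delta_n)}{(1+\delta_k)(2n+S+1)}\cdot\{n-k;\ n-k-1\}$, and $\widetilde b_{nk}=1-\widetilde a_{nk}-\widetilde c_{nk}$, $\widetilde f_{nk}=\widetilde a_{nk}(1-\widetilde\sigma_k-\widetilde\tau_k)$, $\widetilde s_{nk}=\widetilde b_{nk}(1-\widetilde\sigma_k-\widetilde\tau_k)-\delta_k(\widetilde\sigma_k-\widetilde\tau_k)$, $\widetilde v_{nk}=\widetilde c_{nk}(1-\widetilde\sigma_k-\widetilde\tau_k)$.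
   Context: For real $a,b$ and $c^2\neq1$, the Big $-1$ Jacobi polynomials are $$J_{n}(x;a,b,c)=\begin{cases}{}_2F_1\!\left(\begin{smallmatrix}-\frac n2,\ \frac{n+a+b+2}{2}\\ \frac{a+1}{2}\end{smallmatrix};\frac{1-x^2}{1-c^2}\right)+\frac{n(1-x)}{(1+c)(a+1)}\,{}_2F_1\!\left(\begin{smallmatrix}1-\frac n2,\ \frac{n+a+b+2}{2}\\ \frac{a+3}{2}\end{smallmatrix};\frac{1-x^2}{1-c^2}\right), & n\text{ even},\\[2mm] {}_2F_1\!\left(\begin{smallmatrix}-\frac{n-1}2,\ \frac{n+a+b+1}{2}\\ \frac{a+1}{2}\end{smallmatrix};\frac{1-x^2}{1-c^2}\right)-\frac{(n+a+b+1)(1-x)}{(1+c)(a+1)}\,{}_2F_1\!\left(\begin{smallmatrix}-\frac{n-1}2,\ \frac{n+a+b+3}{2}\\ \frac{a+3}{2}\end{smallmatrix};\frac{1-x^2}{1-c^2}\right), & n\text{ odd}.\end{cases}$$ Let $\rho_k(y)=y^k(1-\delta^2/y^2)^{k/2}$ for $k$ even and $\rho_k(y)=y^k(1-\delta^2/y^2)^{(k-1)/2}(1+\delta/y)$ for $k$ odd, and $$\mathcal{J}_{n,k}(x,y)=J_{n-k}\big(y;\alpha,2k+\beta+\gamma+1,(-1)^k\delta\big)\,\rho_k(y)\,J_k\Big(\frac{x}{y};\gamma,\beta,\frac{\delta}{y}\Big).$$ In the paper $\widetilde f_{nk}$ is printed with $\widetilde\tau_{n,k}$; it means $\widetilde\tau_k$.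 *)

(* the statement is a purely algebraic identity between
   rational functions, stated over an arbitrary real field R. *)
From HB Require Import structures.
From mathcomp Require Import all_boot all_order all_algebra.
Set Implicit Arguments. Unset Strict Implicit. Unset Printing Implicit Defensive.
Import Order.TTheory GRing.Theory Num.Theory.
Local Open Scope ring_scope.

Section BigMinusOneJacobi.
Variable R : realFieldType.

Definition poch (x : R) (j : nat) : R := \prod_(i < j) (x + i%:R).

(* terminating Gauss hypergeometric series 2F1(-m, b; c; z)
   (the series stops at j = m since (-m)_j = 0 for j > m) *)
Definition hyp2F1neg (m : nat) (b c z : R) : R :=
  \sum_(j < m.+1)
     poch (- m%:R) j * poch b j / (poch c j * (j`!)%:R) * z ^+ j.

Definition bigJ (n : nat) (a b c x : R) : R :=
  let z := (1 - x ^+ 2) / (1 - c ^+ 2) in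
  if ~~ odd n then
    hyp2F1neg n./2 ((n%:R + a + b + 2) / 2) ((a + 1) / 2) z
    + n%:R * (1 - x) / ((1 + c) * (a + 1))
      * hyp2F1neg n./2.-1 ((n%:R + a + b + 2) / 2) ((a + 3) / 2) z
  else
    hyp2F1neg n./2 ((n%:R + a + b + 1) / 2) ((a + 1) / 2) z
    - (n%:R + a + b + 1) * (1 - x) / ((1 + c) * (a + 1))
      * hyp2F1neg n./2 ((n%:R + a + b + 3) / 2) ((a + 3) / 2) z.

Definition rho (delta : R) (k : nat) (y : R) : R :=
  if ~~ odd k then y ^+ k * (1 - delta ^+ 2 / y ^+ 2) ^+ k./2
  else y ^+ k * (1 - delta ^+ 2 / y ^+ 2) ^+ k./2 * (1 + delta / y).

Definition calJnat (alpha beta gamma delta : R) (n k : nat) (x y : R) : R :=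
  bigJ (n - k) alpha (2 * k%:R + beta + gamma + 1) ((-1) ^+ k * delta) y
  * rho delta k y
  * bigJ k gamma beta (delta / y) (x / y).

Definition calJ (alpha beta gamma delta : R) (m j : int) (x y : R) : R :=
  if (0 <= j)%R && (j <= m)%R then calJnat alpha beta gamma delta `|m|%N `|j|%N x y
  else 0.

Definition dlt (delta : R) (j : nat) : R := (-1) ^+ j * delta.
Definition phi (k : nat) : R := (odd k)%:R.
Definition tauT (beta gamma : R) (k : nat) : R :=
  (k%:R + beta * phi k) / (2 * k%:R + beta + gamma).
Definition sigmaT (beta gamma : R) (k : nat) : R :=
  (k%:R + beta * phi k + gamma + 1) / (2 * k%:R + beta + gamma + 2).
Definition zT (alpha beta gamma delta : R) (n : nat) : R :=
  let S := alpha + beta + gamma in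
  ((-1) ^+ n - delta * (2 * n%:R + S + 2))
  / ((2 * n%:R + S + 1) * (2 * n%:R + S + 3)).

(* {A ; B}: A if n + k even, B if n + k odd *)
Definition parsel (n k : nat) (A B : R) : R := if ~~ odd (n + k) then A else B.

Section Coefs.
Variables (alpha beta gamma delta : R) (n k : nat).
Let S := alpha + beta + gamma.
Let N := n%:R : R.
Let K := k%:R : R.
Let tau := tauT beta gamma k.
Let sig := sigmaT beta gamma k.
Let z := zT alpha beta gamma delta n.

Definition aT : R := (1 + dlt delta n) / (2 * N + S + 3)
  * parsel n k (N - K + alpha + 1) (N + K + S + 2).
Definition cT : R := (1 + dlt delta n.+1) / (2 * N + S + 1)
  * parsel n k (N - K) (N + K + beta + gamma + 1).
Definition eT : R := tau * (1 - dlt delta k) * (1 + dlt delta n) / (2 * N + S + 3)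
  * parsel n k (N - K + alpha + 1) (N - K + alpha + 2).
Definition gT : R := sig * (1 + dlt delta n) / ((1 + dlt delta k) * (2 * N + S + 3))
  * parsel n k (N + K + S + 3) (N + K + S + 2).
Definition rT : R := 2 * tau * z * ((-1) ^+ k - delta)
  * parsel n k (N - K + alpha + 1) (N + K + beta + gamma + 1).
Definition tT : R := 2 * (-1) ^+ k.+1 * sig * z / (1 + dlt delta k)
  * parsel n k (N - K) (N + K + S + 2).
Definition uT : R := tau * (1 - dlt delta k) * (1 - dlt delta n) / (2 * N + S + 1)
  * parsel n k (N + K + beta + gamma) (N + K + beta + gamma + 1).
Definition wT : R := sig * (1 - dlt delta n) / ((1 + dlt delta k) * (2 * N + S + 1))
  * parsel n k (N - K) (N - K - 1).
Definition bT : R := 1 - aT - cT.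
Definition fT : R := aT * (1 - sig - tau).
Definition sT : R := bT * (1 - sig - tau) - dlt delta k * (sig - tau).
Definition vT : R := cT * (1 - sig - tau).
End Coefs.

End BigMinusOneJacobi.

(* J_{n,k}(x, y) = P_{n-k}(y) rho_k(y) Q_k(x/y), where P = J(alpha, 2k + beta + gamma + 1,
   (-1)^k delta) and Q = J(gamma, beta, delta/y) are one-variable big -1 Jacobi
   polynomials.  Multiplication by y is the three-term recurrence of P.  For x,
   write x Q_k = y (x/y) Q_k and expand (x/y) Q_k by the recurrence of Q.  Since
   rho_{k+1} = (y + delta_k) rho_k and rho_k = (y - delta_k) rho_{k-1}, the
   Q_{k+1} and Q_{k-1} terms carry the factors (y + delta_k) and (y - delta_k)^2;
   the accompanying P, whose parameters are those of level k, is re-expanded in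
   the parameters of level k + 1 by a connection formula (b -> b + 2, c -> -c),
   resp. of level k - 1 by the expansion of (y - c)^2 P (b -> b - 2, c -> -c).
   Through the decomposition of a big -1 Jacobi polynomial into its even and odd
   parts, each a terminating 2F1, all one-variable identities reduce to
   contiguous relations of 2F1, which are checked coefficientwise. *)

From HB Require Import structures.
From mathcomp Require Import all_boot all_order all_algebra.
From mathcomp Require Import ring lra zify.
Import Order.TTheory GRing.Theory Num.Theory.
Local Open Scope ring_scope.
Set Implicit Arguments. Unset Strict Implicit. Unset Printing Implicit Defensive.

(** * Terminating hypergeometric polynomials *)

Section Pochhammer.
Variable R : realFieldType.
Implicit Types (x B C : R).

Lemma poch0 x : poch x 0 = 1.
Proof. by rewrite /poch big_ord0. Qed.

Lemma pochS x n : poch x n.+1 = poch x n * (x + n%:R).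
Proof. by rewrite /poch big_ord_recr. Qed.

Lemma pochD x m n : poch x (m + n) = poch x m * poch (x + m%:R) n.
Proof.
elim: n => [|n IHn]; first by rewrite addn0 poch0 mulr1.
by rewrite addnS !pochS IHn natrD -!mulrA addrA.
Qed.

Lemma poch_Nnat (l j : nat) : (l < j)%N -> poch (- l%:R : R) j = 0.
Proof. by move=> lj; rewrite -(subnKC lj) pochD pochS addNr mulr0 mul0r. Qed.

Lemma poch_gt0 x n : 0 < x -> 0 < poch x n.
Proof.
move=> x_gt0; elim: n => [|n IHn]; first by rewrite poch0.
by rewrite pochS mulr_gt0 // ltr_wpDr.
Qed.

Lemma poch_neq0 x n : 0 < x -> poch x n != 0.
Proof. by move=> x_gt0; rewrite gt_eqF ?poch_gt0. Qed.

Lemma natr_fact_addn (i k : nat) :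
  ((i + k)`!)%:R = (i`!)%:R * poch (i%:R + 1) k :> R.
Proof.
elim: k => [|k IHk]; first by rewrite addn0 poch0 mulr1.
by rewrite addnS factS natrM IHk pochS -addn1 !natrD; ring.
Qed.

Lemma natr_fact_poch1 (j : nat) : (j`!)%:R = poch 1 j :> R.
Proof. by rewrite -[j]add0n natr_fact_addn add0r fact0 mul1r. Qed.

Definition hypcoef (L : nat) B C (j : nat) : R :=
  poch (- L%:R) j * poch B j / (poch C j * (j`!)%:R).

Definition hyp_poly (L : nat) B C : {poly R} := \poly_(j < L.+1) hypcoef L B C j.

Lemma hypcoef_out L B C j : (L < j)%N -> hypcoef L B C j = 0.
Proof. by move=> Lj; rewrite /hypcoef poch_Nnat // !mul0r. Qed.

Lemma coef_hyp_poly L B C j : (hyp_poly L B C)`_j = hypcoef L B C j.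
Proof. by rewrite coef_poly; case: ltnP => // Lj; rewrite hypcoef_out. Qed.

Lemma hyp2F1negE L B C z : hyp2F1neg L B C z = (hyp_poly L B C).[z].
Proof. by rewrite horner_poly. Qed.

(* Writes a coefficient over a base shared by all the terms of a contiguous
   relation, which turns the coefficient identity into a rational identity. *)
Lemma hypcoef_split (X B' C' : R) (i : nat) (L : nat) B C (dX dB dC k : nat) :
  0 < C -> (dX <= k)%N -> (dB <= k)%N -> (dC <= k)%N ->
  - L%:R + dX%:R = X -> B + dB%:R = B' -> C + dC%:R = C' ->
  hypcoef L B C (k + i) = poch X i * poch B' i / (poch C' i * (i`!)%:R) *
   (poch (- L%:R) dX * poch (X + i%:R) (k - dX) * (poch B dB * poch (B' + i%:R) (k - dB))
    / (poch C dC * poch (C' + i%:R) (k - dC) * poch (i%:R + 1) k)).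
Proof.
move=> C_gt0 dXk dBk dCk <- <- <-.
have split_at d : (d <= k)%N -> (k + i = d + i + (k - d))%N by lia.
have C'_gt0 : 0 < C + dC%:R by rewrite ltr_wpDr.
have C'i_gt0 : 0 < C + dC%:R + i%:R by rewrite ltr_wpDr.
have := poch_neq0 i C'_gt0; have := poch_neq0 (k - dC) C'i_gt0; have := poch_neq0 dC C_gt0.
have : poch (i%:R + 1) k != 0 :> R by apply: poch_neq0; rewrite ltr_pwDr.
have : (i`!)%:R != 0 :> R by rewrite pnatr_eq0 -lt0n fact_gt0.
rewrite /hypcoef {1}(split_at dX) // {1}(split_at dB) // {1}(split_at dC) // [(k + i)%N]addnC.
rewrite !pochD !natrD !addrA natr_fact_addn.
by move=> *; field; do ! (apply/andP; split).
Qed.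

End Pochhammer.

(** * Contiguous relations *)

Ltac nonzero := match goal with
 | |- is_true true => done
 | H : is_true (?X != 0) |- is_true (?X != 0) => exact H
 | |- is_true (_ && _) => apply/andP; split; nonzero
 | |- is_true (_ * _ != 0) => apply: mulf_neq0; nonzero
 | |- is_true (_^-1 != 0) => apply: invr_neq0; nonzero
 | |- is_true (- _ != 0) => rewrite oppr_eq0; nonzero
 | |- is_true (poch _ _ != 0) => apply: poch_neq0; lra
 | |- is_true ((_`!)%:R != 0) => by rewrite pnatr_eq0 -lt0n fact_gt0
 | |- _ => apply: lt0r_neq0; lra end.

Ltac hypcoef_small := rewrite /hypcoef ?natr_fact_poch1 ?pochS ?poch0; field; nonzero.

Ltac split_hypcoef base L B C k dX dB dC :=
  rewrite (base L B C dX dB dC k ltac:(lra) erefl erefl erefl ltac:(ring) ltac:(ring) ltac:(ring)).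

(* The even and odd parts of a big -1 Jacobi polynomial are of this form,
   see [bigJ_even] and [bigJ_odd]. *)
Definition hypF (R : realFieldType) (h p : R) (l e d : nat) : {poly R} :=
  hyp_poly l (l%:R + h + e%:R) (p + d%:R).

Section Contiguous.
Variables (R : realFieldType) (h p : R).

Local Notation F := (hypF h p).

Lemma hyp_contig_X (l : nat) : 0 < p ->
  (2 * l%:R + h + 2) *: (F l 2 1 * 'X) = p *: (F l 1 0 - F l.+1 1 0).
Proof.
move=> p_gt0; apply/polyP => j; rewrite /hypF !(coefZ, coefB, coefMX, coef_hyp_poly).
have l_ge0 := ler0n R l; have l1_ge0 := ler0n R l.+1.
case: j => [|[|[|i]]] /=; [hypcoef_small..|].
have i_ge0 := ler0n R i.
have base := @hypcoef_split R (- l%:R) (l%:R + h + 2) (p + 1) i.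
split_hypcoef base l (l%:R + h + 2%:R) (p + 1%:R) 2%N 0%N 0%N 0%N.
split_hypcoef base l (l%:R + h + 1%:R) (p + 0%:R) 3%N 0%N 1%N 1%N.
split_hypcoef base l.+1 (l.+1%:R + h + 1%:R) (p + 0%:R) 3%N 1%N 0%N 1%N.
rewrite !pochS !poch0; field; nonzero.
Qed.

Lemma hyp_contig_c (l : nat) : 0 < p ->
  (p * (2 * l%:R + h + 3)) *: F l.+1 1 0 =
  ((l%:R + h + 2) * (l%:R + p + 1)) *: F l.+1 2 1
  - ((l%:R + 1) * (l%:R + h - p + 2)) *: F l 2 1.
Proof.
move=> p_gt0; apply/polyP => j; rewrite /hypF !(coefZ, coefB, coef_hyp_poly).
have l_ge0 := ler0n R l; have l1_ge0 := ler0n R l.+1.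
case: j => [|[|[|i]]] /=; [hypcoef_small..|].
have i_ge0 := ler0n R i.
have base := @hypcoef_split R (- l%:R) (l%:R + h + 3) (p + 1) i.
split_hypcoef base l.+1 (l.+1%:R + h + 1%:R) (p + 0%:R) 3%N 1%N 1%N 1%N.
split_hypcoef base l.+1 (l.+1%:R + h + 2%:R) (p + 1%:R) 3%N 1%N 0%N 0%N.
split_hypcoef base l (l%:R + h + 2%:R) (p + 1%:R) 3%N 0%N 1%N 0%N.
rewrite !pochS !poch0; field; nonzero.
Qed.

Lemma hyp_contig_b (l e d : nat) : 0 < p ->
  (2 * l%:R + h + e%:R) *: F l e d = (l%:R + h + e%:R) *: F l e.+1 d + l%:R *: F l.-1 e.+1 d.
Proof.
move=> p_gt0; apply/polyP => j; rewrite /hypF !(coefZ, coefD, coef_hyp_poly).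
have e_ge0 := ler0n R e; have d_ge0 := ler0n R d.
case: l => [|l].
  by case: j => [|j]; [hypcoef_small | rewrite !hypcoef_out //; ring].
have l_ge0 := ler0n R l; have l1_ge0 := ler0n R l.+1.
case: j => [|[|[|i]]] /=; [hypcoef_small..|].
have i_ge0 := ler0n R i.
have base := @hypcoef_split R (- l%:R) (l%:R + h + e%:R + 2) (p + d%:R + 1) i.
split_hypcoef base l.+1 (l.+1%:R + h + e%:R) (p + d%:R) 3%N 1%N 1%N 1%N.
split_hypcoef base l.+1 (l.+1%:R + h + e.+1%:R) (p + d%:R) 3%N 1%N 0%N 1%N.
split_hypcoef base l (l%:R + h + e.+1%:R) (p + d%:R) 3%N 0%N 1%N 1%N.
rewrite !pochS !poch0; field; nonzero.
Qed.

Section SquareFactor.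
Variable c : R.

Lemma hyp_contig_sqr_even1 (l : nat) : 0 < p -> 0 < h ->
  (1 - c) *: F l 1 0 - (1 + c) *: (F l 1 0 * 'X) - (2 * c * l%:R / p) *: (F l.-1 2 1 * 'X) =
  ((1 + c) * (l%:R + p) / (2 * l%:R + h + 1)) *: F l.+1 0 0
  + ((1 - c * (4 * l%:R + 2 * h + 1)) * (l%:R + p) / ((2 * l%:R + h) * (2 * l%:R + h + 1))
     + (1 - c) * (l%:R + h - p) / (2 * l%:R + h)) *: F l 0 0.
Proof.
move=> p_gt0 h_gt0; apply/polyP => j; rewrite /hypF !(coefZ, coefD, coefN, coefMX, coef_hyp_poly).
case: l => [|l].
  by case: j => [|[|[|i]]] /=; [hypcoef_small..| rewrite !hypcoef_out //; ring].
have l_ge0 := ler0n R l; have l1_ge0 := ler0n R l.+1; have l2_ge0 := ler0n R l.+2.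
case: j => [|[|[|i]]] /=; [hypcoef_small..|].
have i_ge0 := ler0n R i.
have base := @hypcoef_split R (- l%:R) (l%:R + h + 2) (p + 1) i.
split_hypcoef base l.+1 (l.+1%:R + h + 1%:R) (p + 0%:R) 3%N 1%N 0%N 1%N.
split_hypcoef base l.+1 (l.+1%:R + h + 1%:R) (p + 0%:R) 2%N 1%N 0%N 1%N.
split_hypcoef base l (l%:R + h + 2%:R) (p + 1%:R) 2%N 0%N 0%N 0%N.
split_hypcoef base l.+2 (l.+2%:R + h + 0%:R) (p + 0%:R) 3%N 2%N 0%N 1%N.
split_hypcoef base l.+1 (l.+1%:R + h + 0%:R) (p + 0%:R) 3%N 1%N 1%N 1%N.
rewrite !pochS !poch0; field; nonzero.
Qed.

Lemma hyp_contig_sqr_even2 (l : nat) : 0 < p -> 0 < h ->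
  (2 * c * p) *: F l 1 0 + ((1 + c) * l%:R) *: F l.-1 2 1
  - ((1 - c) * l%:R) *: (F l.-1 2 1 * 'X) =
  ((1 + c) * (l%:R + p) * (l%:R + 1) / (2 * l%:R + h + 1)
   - (1 - c * (4 * l%:R + 2 * h + 1)) * (l%:R + p) * (l%:R + h)
     / ((2 * l%:R + h) * (2 * l%:R + h + 1))) *: F l 1 1
  + ((1 - c) * (l%:R + h - p) * l%:R / (2 * l%:R + h)) *: F l.-1 1 1.
Proof.
move=> p_gt0 h_gt0; apply/polyP => j; rewrite /hypF !(coefZ, coefD, coefN, coefMX, coef_hyp_poly).
case: l => [|l].
  by case: j => [|[|[|i]]] /=; [hypcoef_small..| rewrite !hypcoef_out //; ring].
have l_ge0 := ler0n R l; have l1_ge0 := ler0n R l.+1; have l2_ge0 := ler0n R l.+2.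
case: j => [|[|[|i]]] /=; [hypcoef_small..|].
have i_ge0 := ler0n R i.
have base := @hypcoef_split R (- l%:R) (l%:R + h + 2) (p + 1) i.
split_hypcoef base l.+1 (l.+1%:R + h + 1%:R) (p + 0%:R) 3%N 1%N 0%N 1%N.
split_hypcoef base l (l%:R + h + 2%:R) (p + 1%:R) 3%N 0%N 0%N 0%N.
split_hypcoef base l (l%:R + h + 2%:R) (p + 1%:R) 2%N 0%N 0%N 0%N.
split_hypcoef base l.+1 (l.+1%:R + h + 1%:R) (p + 1%:R) 3%N 1%N 0%N 0%N.
split_hypcoef base l (l%:R + h + 1%:R) (p + 1%:R) 3%N 0%N 1%N 0%N.
rewrite !pochS !poch0; field; nonzero.
Qed.

Lemma hyp_contig_sqr_odd1 (l : nat) : 0 < p -> 0 < h ->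
  (1 - c) *: F l 1 0 - (1 + c) *: (F l 1 0 * 'X)
  + (2 * c * (l%:R + h + 1) / p) *: (F l 2 1 * 'X) =
  (((1 - c) * (l%:R + p + 1) * (2 * l%:R + h + 1)
    - (1 + c * (4 * l%:R + 2 * h + 3)) * (l%:R + h - p + 1))
   / ((2 * l%:R + h + 1) * (2 * l%:R + h + 2))) *: F l.+1 0 0
  + ((1 + c) * (l%:R + h - p + 1) / (2 * l%:R + h + 1)) *: F l 0 0.
Proof.
move=> p_gt0 h_gt0; apply/polyP => j; rewrite /hypF !(coefZ, coefD, coefN, coefMX, coef_hyp_poly).
have l_ge0 := ler0n R l; have l1_ge0 := ler0n R l.+1.
case: j => [|[|[|i]]] /=; [hypcoef_small..|].
have i_ge0 := ler0n R i.
have base := @hypcoef_split R (- l%:R) (l%:R + h + 2) (p + 1) i.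
split_hypcoef base l (l%:R + h + 1%:R) (p + 0%:R) 3%N 0%N 1%N 1%N.
split_hypcoef base l (l%:R + h + 1%:R) (p + 0%:R) 2%N 0%N 1%N 1%N.
split_hypcoef base l (l%:R + h + 2%:R) (p + 1%:R) 2%N 0%N 0%N 0%N.
split_hypcoef base l.+1 (l.+1%:R + h + 0%:R) (p + 0%:R) 3%N 1%N 1%N 1%N.
split_hypcoef base l (l%:R + h + 0%:R) (p + 0%:R) 3%N 0%N 2%N 1%N.
rewrite !pochS !poch0; field; nonzero.
Qed.

Lemma hyp_contig_sqr_odd2 (l : nat) : 0 < p -> 0 < h ->
  (2 * c * p) *: F l 1 0 - ((1 + c) * (l%:R + h + 1)) *: F l 2 1
  + ((1 - c) * (l%:R + h + 1)) *: (F l 2 1 * 'X) =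
  (- ((1 - c) * (l%:R + p + 1) * (l%:R + h + 1) / (2 * l%:R + h + 2))) *: F l.+1 1 1
  + ((- 1 - c * (4 * l%:R + 2 * h + 3)) * (l%:R + h - p + 1) * (l%:R + 1)
     / ((2 * l%:R + h + 1) * (2 * l%:R + h + 2))
     - (1 + c) * (l%:R + h - p + 1) * (l%:R + h) / (2 * l%:R + h + 1)) *: F l 1 1.
Proof.
move=> p_gt0 h_gt0; apply/polyP => j; rewrite /hypF !(coefZ, coefD, coefN, coefMX, coef_hyp_poly).
have l_ge0 := ler0n R l; have l1_ge0 := ler0n R l.+1.
case: j => [|[|[|i]]] /=; [hypcoef_small..|].
have i_ge0 := ler0n R i.
have base := @hypcoef_split R (- l%:R) (l%:R + h + 2) (p + 1) i.
split_hypcoef base l (l%:R + h + 1%:R) (p + 0%:R) 3%N 0%N 1%N 1%N.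
split_hypcoef base l (l%:R + h + 2%:R) (p + 1%:R) 3%N 0%N 0%N 0%N.
split_hypcoef base l (l%:R + h + 2%:R) (p + 1%:R) 2%N 0%N 0%N 0%N.
split_hypcoef base l.+1 (l.+1%:R + h + 1%:R) (p + 1%:R) 3%N 1%N 0%N 0%N.
split_hypcoef base l (l%:R + h + 1%:R) (p + 1%:R) 3%N 0%N 1%N 0%N.
rewrite !pochS !poch0; field; nonzero.
Qed.

End SquareFactor.

End Contiguous.

(** * One-variable relations for big -1 Jacobi polynomials *)

Section OneVariable.
Variable R : realFieldType.
Implicit Types (a b c x h p : R).

Definition zarg c x : R := (1 - x ^+ 2) / (1 - c ^+ 2).

Local Notation horner_lin := (hornerD, hornerN, hornerZ, hornerMX).

Lemma natr_double (n : nat) : (n.*2)%:R = 2 * n%:R :> R.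
Proof. by rewrite -muln2 natrM mulrC. Qed.

Lemma bigJ_even a b c x l h e p : (a + 1) / 2 = p -> (a + b) / 2 + 1 = h + e%:R ->
  bigJ l.*2 a b c x = (hypF h p l e 0).[zarg c x]
    + (l.*2)%:R * (1 - x) / ((1 + c) * (a + 1)) * (hypF h p l.-1 e.+1 1).[zarg c x].
Proof.
move=> Ep Eh; have {}Eh : h = (a + b) / 2 + 1 - e%:R by rewrite Eh; ring.
rewrite /hypF -!hyp2F1negE /bigJ odd_double /= doubleK -/(zarg c x) Ep addr0.
have -> : ((l.*2)%:R + a + b + 2) / 2 = l%:R + h + e%:R by rewrite Eh natr_double; field.
case: l => [|l] /=; first by rewrite !mulr0n !mul0r.
congr (_ + _ * _); congr (hyp2F1neg _ _ _ _); first by ring.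
by rewrite -Ep; field.
Qed.

Lemma bigJ_odd a b c x l h e p : (a + 1) / 2 = p -> (a + b) / 2 + 1 = h + e%:R ->
  bigJ l.*2.+1 a b c x = (hypF h p l e 0).[zarg c x]
    - 2 * (l%:R + h + e%:R) * (1 - x) / ((1 + c) * (a + 1)) * (hypF h p l e.+1 1).[zarg c x].
Proof.
move=> Ep Eh; have {}Eh : h = (a + b) / 2 + 1 - e%:R by rewrite Eh; ring.
rewrite /hypF -!hyp2F1negE /bigJ /= odd_double /= uphalf_double -/(zarg c x) Ep addr0.
have Ebig : (l.*2.+1)%:R + a + b + 1 = 2 * (l%:R + h + e%:R).
  by rewrite Eh mulrSr natr_double; field.
rewrite Ebig; have -> : 2 * (l%:R + h + e%:R) / 2 = l%:R + h + e%:R by field.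
congr (_ - _ * _); congr (hyp2F1neg _ _ _ _).
  by rewrite Eh !mulrSr natr_double; field.
by rewrite -Ep; field.
Qed.

Lemma hornerF0 h p z e d : (hypF h p 0 e d).[z] = 1.
Proof.
rewrite /hypF -hyp2F1negE /hyp2F1neg big_ord1 /=.
by rewrite !poch0 mulr1 divr1 expr0 mulr1.
Qed.

Lemma hornerF1 h p z e d : 0 < p + d%:R ->
  (hypF h p 1 e d).[z] = 1 - (1 + h + e%:R) / (p + d%:R) * z.
Proof.
move=> pd_gt0; rewrite /hypF -hyp2F1negE /hyp2F1neg !big_ord_recr big_ord0 /=.
by rewrite !pochS !poch0 expr0 expr1 !factS !fact0 /=; field; nonzero.
Qed.

Lemma parity_ind (P : nat -> Prop) :
  (forall l, P l.*2) -> (forall l, P l.*2.+1) -> forall m, P m.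
Proof. by move=> Pe Po m; rewrite -[m]odd_double_half; case: (odd m); [apply: Po | apply: Pe]. Qed.

Definition rec_A a b c (m : nat) : R := (1 + (-1) ^+ m * c) / (2 * m%:R + a + b + 2)
  * (if odd m then m%:R + a + b + 1 else m%:R + a + 1).
Definition rec_C a b c (m : nat) : R := (1 - (-1) ^+ m * c) / (2 * m%:R + a + b)
  * (if odd m then m%:R + b else m%:R).

Lemma rec_C0 a b c : rec_C a b c 0 = 0.
Proof. by rewrite /rec_C mulr0. Qed.

Lemma bigJ_rec a b c x m : -1 < a -> -1 < b -> 1 - c ^+ 2 != 0 -> 1 + c != 0 ->
  x * bigJ m a b c x = rec_A a b c m * bigJ m.+1 a b c x
    + (1 - rec_A a b c m - rec_C a b c m) * bigJ m a b c x + rec_C a b c m * bigJ m.-1 a b c x.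
Proof.
move=> a_gt b_gt c2_neq1 c_neqN1.
pose p := (a + 1) / 2; pose h := (a + b) / 2.
have p_gt0 : 0 < p by rewrite /p; lra.
have h_gt : -1 < h by rewrite /h; lra.
have Ea : a = 2 * p - 1 by rewrite /p; field.
have Eb : b = 2 * h - 2 * p + 1 by rewrite /h /p; field.
have bE l := @bigJ_even a b c x l h 1 p erefl erefl.
have bO l := @bigJ_odd a b c x l h 1 p erefl erefl.
clearbody p h; set z := zarg c x in bE bO *.
have contig_X l : (hypF h p l.+1 1 0).[z] = (hypF h p l 1 0).[z]
    - (2 * l%:R + h + 2) * ((hypF h p l 2 1).[z] * z) / p.
  have := congr1 (horner^~ z) (@hyp_contig_X _ h p l p_gt0); rewrite !horner_lin /= => ->.
  by field; nonzero.
have contig_c l : (hypF h p l.+1 2 1).[z] = (p * (2 * l%:R + h + 3) * (hypF h p l.+1 1 0).[z]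
    + (l%:R + 1) * (l%:R + h - p + 2) * (hypF h p l 2 1).[z]) / ((l%:R + h + 2) * (l%:R + p + 1)).
  have l_ge0 := ler0n R l.
  have := congr1 (horner^~ z) (@hyp_contig_c _ h p l p_gt0); rewrite !horner_lin /= => E.
  by apply: (canRL (mulfK _)); [nonzero | rewrite E; ring].
rewrite /rec_A /rec_C -signr_odd.
elim/parity_ind: m => -[|l] /=.
- rewrite (bE 0) (bO 0) /= !hornerF0 double0 !mulr0n !(mulr0, mul0r, addr0, subr0).
  by rewrite Ea Eb /z /zarg; field; nonzero.
- have l_ge0 := ler0n R l; have l1_ge0 := ler0n R l.+1.
  rewrite (bE l.+1) (bO l.+1) (bO l) /= odd_double /= (contig_c l) (contig_X l) !natr_double.
  by rewrite Ea Eb /z /zarg; field; nonzero.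
- rewrite (bE 1) (bO 0) (bE 0) /= !hornerF0 hornerF1 ?addr0 //.
  by rewrite ?doubleS !double0 Ea Eb /z /zarg; field; nonzero.
- have l_ge0 := ler0n R l; have l1_ge0 := ler0n R l.+1; have l2_ge0 := ler0n R l.+2.
  rewrite (bE l.+2) (bO l.+1) (bE l.+1) /= odd_double /= -!muln2.
  rewrite (contig_X l.+1) (contig_c l).
  by rewrite Ea Eb /z /zarg; field; nonzero.
Qed.

Lemma zargN c x : zarg (- c) x = zarg c x.
Proof. by rewrite /zarg sqrrN. Qed.

Lemma solve_lin_l (k X L M : R) : k != 0 -> L = k * X + M -> X = (L - M) / k.
Proof. by move=> k_neq0 ->; field. Qed.

Lemma solve_lin_r (k X L M : R) : k != 0 -> L = M + k * X -> X = (L - M) / k.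
Proof. by move=> k_neq0 ->; field. Qed.

Definition conn_G a b c (m : nat) : R :=
  (1 + (-1) ^+ m * c) / ((1 + c) * (2 * m%:R + a + b + 2))
  * (if odd m then m%:R + a + b + 1 else m%:R + a + b + 2).
Definition conn_T a b c (m : nat) : R := 2 * (c * (2 * m%:R + a + b + 1) - (-1) ^+ m)
  / ((1 + c) * (2 * m%:R + a + b) * (2 * m%:R + a + b + 2))
  * (if odd m then m%:R + a + b + 1 else m%:R).
Definition conn_W a b c (m : nat) : R := (1 - (-1) ^+ m * c) / ((1 + c) * (2 * m%:R + a + b))
  * (if odd m then m%:R - 1 else m%:R).

Lemma conn_T0 a b c : conn_T a b c 0 = 0.
Proof. by rewrite /conn_T mulr0. Qed.

Lemma conn_W0 a b c : conn_W a b c 0 = 0.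
Proof. by rewrite /conn_W mulr0. Qed.

Lemma conn_W1 a b c : conn_W a b c 1 = 0.
Proof. by rewrite /conn_W subrr mulr0. Qed.

Lemma bigJ_connection a b c x m :
  -1 < a -> -1 < b -> 1 - c ^+ 2 != 0 -> 1 + c != 0 -> 1 - c != 0 ->
  bigJ m a b c x = conn_G a b c m * bigJ m a (b + 2) (- c) x
    + conn_T a b c m * bigJ m.-1 a (b + 2) (- c) x
    + conn_W a b c m * bigJ m.-2 a (b + 2) (- c) x.
Proof.
move=> a_gt b_gt c2_neq1 c_neqN1 c_neq1.
pose p := (a + 1) / 2; pose h := (a + b) / 2.
have p_gt0 : 0 < p by rewrite /p; lra.
have h_gt : -1 < h by rewrite /h; lra.
have Ea : a = 2 * p - 1 by rewrite /p; field.
have Eb : b = 2 * h - 2 * p + 1 by rewrite /h /p; field.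
have bE l := @bigJ_even a b c x l h 1 p erefl erefl.
have bO l := @bigJ_odd a b c x l h 1 p erefl erefl.
have Eh2 : (a + (b + 2)) / 2 + 1 = h + 2%:R by rewrite /h; field.
have bE2 l := @bigJ_even a (b + 2) (- c) x l h 2 p erefl Eh2.
have bO2 l := @bigJ_odd a (b + 2) (- c) x l h 2 p erefl Eh2.
clearbody p h; rewrite zargN in bE2 bO2; set z := zarg c x in bE bO bE2 bO2 *.
have contig_b l e d : (0 < e)%N -> (hypF h p l e d).[z] =
    ((l%:R + h + e%:R) * (hypF h p l e.+1 d).[z] + l%:R * (hypF h p l.-1 e.+1 d).[z])
    / (2 * l%:R + h + e%:R).
  move=> e_gt0; have l_ge0 := ler0n R l; have e_ge1 : 1 <= e%:R :> R by rewrite ler1n.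
  have := congr1 (horner^~ z) (@hyp_contig_b _ h p l e d p_gt0); rewrite !horner_lin => E.
  by apply: (canRL (mulfK _)); [nonzero | rewrite mulrC E].
rewrite /conn_G /conn_T /conn_W -signr_odd.
elim/parity_ind: m => -[|l] /=.
- rewrite (bE 0) (bE2 0) /= !hornerF0 double0 !mulr0n !(mulr0, mul0r, addr0).
  by rewrite Ea Eb /z /zarg; field; nonzero.
- have l_ge0 := ler0n R l; have l1_ge0 := ler0n R l.+1.
  rewrite (bE l.+1) (bE2 l.+1) (bO2 l) (bE2 l) /= odd_double /= -!muln2.
  rewrite (contig_b l.+1 1 0) // (contig_b l 2 1) //=.
  by rewrite Ea Eb /z /zarg; field; nonzero.
- rewrite (bO 0) (bO2 0) (bE2 0) /= !hornerF0 !double0.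
  by rewrite Ea Eb /z /zarg; field; nonzero.
- have l_ge0 := ler0n R l; have l1_ge0 := ler0n R l.+1.
  rewrite (bO l.+1) (bO2 l.+1) (bE2 l.+1) (bO2 l) /= odd_double /= -!muln2.
  rewrite (contig_b l.+1 1 0) // (contig_b l.+1 2 1) //=.
  by rewrite Ea Eb /z /zarg; field; nonzero.
Qed.

Definition sqr_E a b c (m : nat) : R :=
  (1 - c) * (1 + (-1) ^+ m * c) / (2 * m%:R + a + b + 2)
  * (if odd m then m%:R + a + 2 else m%:R + a + 1).
Definition sqr_R a b c (m : nat) : R :=
  2 * (1 - c) * ((-1) ^+ m - c * (2 * m%:R + a + b + 1))
  / ((2 * m%:R + a + b) * (2 * m%:R + a + b + 2))
  * (if odd m then m%:R + b else m%:R + a + 1).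
Definition sqr_U a b c (m : nat) : R :=
  (1 - c) * (1 - (-1) ^+ m * c) / (2 * m%:R + a + b)
  * (if odd m then m%:R + b else m%:R + b - 1).

Lemma bigJ_mul_sqr a b c x m :
  -1 < a -> 1 < b -> 1 - c ^+ 2 != 0 -> 1 + c != 0 -> 1 - c != 0 ->
  (x - c) ^+ 2 * bigJ m a b c x = sqr_E a b c m * bigJ m.+2 a (b - 2) (- c) x
    + sqr_R a b c m * bigJ m.+1 a (b - 2) (- c) x + sqr_U a b c m * bigJ m a (b - 2) (- c) x.
Proof.
move=> a_gt b_gt c2_neq1 c_neqN1 c_neq1.
pose p := (a + 1) / 2; pose h := (a + b) / 2.
have p_gt0 : 0 < p by rewrite /p; lra.
have h_gt0 : 0 < h by rewrite /h; lra.
have hp_gt0 : 0 < h - p by rewrite /h /p; lra.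
have Ea : a = 2 * p - 1 by rewrite /p; field.
have Eb : b = 2 * h - 2 * p + 1 by rewrite /h /p; field.
have bE l := @bigJ_even a b c x l h 1 p erefl erefl.
have bO l := @bigJ_odd a b c x l h 1 p erefl erefl.
have Eh0 : (a + (b - 2)) / 2 + 1 = h + 0%:R by rewrite /h; field.
have bE0 l := @bigJ_even a (b - 2) (- c) x l h 0 p erefl Eh0.
have bO0 l := @bigJ_odd a (b - 2) (- c) x l h 0 p erefl Eh0.
clearbody p h; rewrite zargN in bE0 bO0; set z := zarg c x in bE bO bE0 bO0 *.
rewrite /sqr_E /sqr_R /sqr_U -signr_odd.
elim/parity_ind: m => [[|l]|l] /=.
- rewrite (bE 0) (bE0 1) (bO0 0) (bE0 0) /= !hornerF0 hornerF1 ?addr0 //.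
  by rewrite ?doubleS !double0 Ea Eb /z /zarg; field; nonzero.
- have l_ge0 := ler0n R l; have l1_ge0 := ler0n R l.+1; have l2_ge0 := ler0n R l.+2.
  rewrite (bE l.+1) (bE0 l.+2) (bO0 l.+1) (bE0 l.+1) /= odd_double /= -!muln2.
  have := congr1 (horner^~ z) (@hyp_contig_sqr_even1 _ h p c l.+1 p_gt0 h_gt0); rewrite !horner_lin /=.
  move/solve_lin_l => -> //; last by nonzero.
  have := congr1 (horner^~ z) (@hyp_contig_sqr_even2 _ h p c l.+1 p_gt0 h_gt0); rewrite !horner_lin /=.
  move/solve_lin_r => -> //; last by nonzero.
  by rewrite Ea Eb /z /zarg; field; nonzero.
- have l_ge0 := ler0n R l; have l1_ge0 := ler0n R l.+1.
  rewrite (bO l) (bO0 l.+1) (bE0 l.+1) (bO0 l) /= odd_double /= -!muln2.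
  have := congr1 (horner^~ z) (@hyp_contig_sqr_odd1 _ h p c l p_gt0 h_gt0); rewrite !horner_lin /=.
  move/solve_lin_r => -> //; last by nonzero.
  have := congr1 (horner^~ z) (@hyp_contig_sqr_odd2 _ h p c l p_gt0 h_gt0); rewrite !horner_lin /=.
  move/solve_lin_l => -> //; last by nonzero.
  by rewrite Ea Eb /z /zarg; field; nonzero.
Qed.

End OneVariable.

(** * The coefficients *)

Lemma odd_addnK (k m : nat) : odd (k + m + k) = odd m.
Proof. by rewrite addnC addnA addnn oddD odd_double. Qed.

(* At n = k + m the coefficients of the proposition are those of the
   one-variable relations for P, whose parameters are b = 2k + beta + gamma + 1
   and c = (-1)^k delta, possibly times sigma_k or tau_k. *)
Ltac parity_field k m :=
  rewrite /parsel odd_addnK /dlt ?exprS ?exprD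
    -[(-1) ^+ k]signr_odd -[(-1) ^+ m]signr_odd ?natrD;
  lazymatch goal with |- @eq ?T _ _ => have := ler0n T k; have := ler0n T m end;
  case: (odd k); case: (odd m) => /=;
  rewrite ?expr0 ?expr1 ?mulN1r ?mul1r ?opprK => *; field; nonzero.

Section Coefficients.
Variables (R : realFieldType) (al be ga de : R).
Local Notation b_ k := (2 * k%:R + be + ga + 1).
Local Notation c_ k := ((-1) ^+ k * de).

Lemma aT_recA k m : -1 < al -> -1 < be -> -1 < ga ->
  aT al be ga de (k + m) k = rec_A al (b_ k) (c_ k) m.
Proof. by move=> *; rewrite /aT /rec_A; parity_field k m. Qed.

Lemma cT_recC k m : -1 < al -> -1 < be -> -1 < ga ->
  cT al be ga de (k + m) k = rec_C al (b_ k) (c_ k) m.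
Proof.
move=> *; case: (posnP m) => [->|m_gt0].
  by rewrite /cT /rec_C /parsel addn0 addnn odd_double /= subrr mulr0n !mulr0.
have m_ge1 : 1 <= m%:R :> R by rewrite ler1n.
by rewrite /cT /rec_C; parity_field k m.
Qed.

Lemma gT_connG k m : -1 < al -> -1 < be -> -1 < ga -> 1 + de != 0 -> 1 - de != 0 ->
  gT al be ga de (k + m) k = sigmaT be ga k * conn_G al (b_ k) (c_ k) m.
Proof. by move=> *; rewrite /gT /conn_G; parity_field k m. Qed.

Lemma tT_connT k m : -1 < al -> -1 < be -> -1 < ga -> 1 + de != 0 -> 1 - de != 0 ->
  tT al be ga de (k + m) k = sigmaT be ga k * conn_T al (b_ k) (c_ k) m.
Proof.
move=> *; case: (posnP m) => [->|m_gt0].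
  by rewrite /tT /conn_T /parsel addn0 addnn odd_double /= subrr mulr0n !mulr0.
have m_ge1 : 1 <= m%:R :> R by rewrite ler1n.
by rewrite /tT /conn_T /zT; parity_field k m.
Qed.

Lemma wT_connW k m : -1 < al -> -1 < be -> -1 < ga -> 1 + de != 0 -> 1 - de != 0 ->
  wT al be ga de (k + m) k = sigmaT be ga k * conn_W al (b_ k) (c_ k) m.
Proof.
move=> *; case: (leqP m 1) => [|m_gt1].
  case: m => [|[|//]] _.
    by rewrite /wT /conn_W /parsel addn0 addnn odd_double /= subrr mulr0n !mulr0.
  rewrite /wT /conn_W /parsel odd_addnK /= natrD.
  have -> : k%:R + 1%:R - k%:R - 1 = 0 :> R by ring.
  by rewrite subrr !mulr0.
have m_ge2 : 2 <= m%:R :> R by rewrite (ler_nat _ 2).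
by rewrite /wT /conn_W; parity_field k m.
Qed.

Lemma eT_sqrE k m : -1 < al -> -1 < be -> -1 < ga ->
  eT al be ga de (k + m) k = tauT be ga k * sqr_E al (b_ k) (c_ k) m.
Proof. by move=> *; rewrite /eT /sqr_E; parity_field k m. Qed.

Lemma rT_sqrR k m : -1 < al -> -1 < be -> -1 < ga -> (0 < k)%N ->
  rT al be ga de (k + m) k = tauT be ga k * sqr_R al (b_ k) (c_ k) m.
Proof.
case: k => [|k] // *; have k1_ge0 := ler0n R k.+1.
by rewrite /rT /sqr_R /zT; parity_field k m.
Qed.

Lemma uT_sqrU k m : -1 < al -> -1 < be -> -1 < ga -> (0 < k)%N ->
  uT al be ga de (k + m) k = tauT be ga k * sqr_U al (b_ k) (c_ k) m.
Proof.
case: k => [|k] // *; have k1_ge0 := ler0n R k.+1.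
by rewrite /uT /sqr_U; parity_field k m.
Qed.

End Coefficients.

Section InnerFactor.
Variables (R : realFieldType) (be ga de y : R).

Lemma sigmaT_recA k : -1 < be -> -1 < ga -> y != 0 ->
  rec_A ga be (de / y) k * y = (y + (-1) ^+ k * de) * sigmaT be ga k.
Proof.
move=> *; have := ler0n R k; rewrite /rec_A /sigmaT /phi -signr_odd.
by case: (odd k) => /= *; rewrite ?expr0 ?expr1; field; nonzero.
Qed.

Lemma tauT_recC k : -1 < be -> -1 < ga -> y != 0 ->
  rec_C ga be (de / y) k * y = (y - (-1) ^+ k * de) * tauT be ga k.
Proof.
move=> *; case: k => [|k].
  by rewrite /rec_C /tauT /phi /= !mulr0n !(mulr0, mul0r, addr0, add0r).
have := ler0n R k; rewrite /rec_C /tauT /phi -signr_odd.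
by case: (odd k.+1) => /= *; rewrite ?expr0 ?expr1; field; nonzero.
Qed.

End InnerFactor.

(** * The bivariate polynomials *)

Lemma PoszS1 (n : nat) : n%:Z + 1 = n.+1.
Proof. by rewrite -PoszD addn1. Qed.

Lemma PoszSB1 (n : nat) : n.+1%:Z - 1 = n.
Proof. by rewrite -PoszS1 addrK. Qed.

Lemma sign_c_neq0 (R : realFieldType) (d : R) (j : nat) : d != 1 -> d != -1 ->
  [/\ 1 + (-1) ^+ j * d != 0, 1 - (-1) ^+ j * d != 0 & 1 - ((-1) ^+ j * d) ^+ 2 != 0].
Proof.
move=> d_neq1 d_neqN1.
have dP : 1 + d != 0 by rewrite addrC addr_eq0.
have dN : 1 - d != 0 by rewrite subr_eq0 eq_sym.
have d2 : 1 - d ^+ 2 != 0.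
  by rewrite (_ : 1 - d ^+ 2 = (1 - d) * (1 + d)) ?mulf_neq0 //; ring.
by rewrite -signr_odd; case: (odd j); rewrite ?mul1r ?mulN1r ?sqrrN ?opprK.
Qed.

Lemma sign_y_neq0 (R : realFieldType) (y d : R) (j : nat) : y ^+ 2 != d ^+ 2 ->
  y + (-1) ^+ j * d != 0 /\ y - (-1) ^+ j * d != 0.
Proof.
move=> y2_neq; have : (y - d) * (y + d) != 0.
  by rewrite (_ : _ * _ = y ^+ 2 - d ^+ 2) ?subr_eq0 //; ring.
rewrite mulf_eq0 negb_or => /andP [yN yP].
by rewrite -signr_odd; case: (odd j); rewrite ?mul1r ?mulN1r ?opprK.
Qed.

Lemma ratio_c_neq0 (R : realFieldType) (y d : R) : y != 0 -> y ^+ 2 != d ^+ 2 ->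
  1 - (d / y) ^+ 2 != 0 /\ 1 + d / y != 0.
Proof.
move=> y_neq0 y2_neq; have [yP yN] := sign_y_neq0 0 y2_neq.
rewrite expr0 mul1r in yP yN; split.
  by rewrite (_ : _ - _ = (y - d) * (y + d) / y ^+ 2) ?mulf_neq0 ?invr_neq0 ?expf_neq0 //; field.
by rewrite (_ : _ + _ = (y + d) / y) ?mulf_neq0 ?invr_neq0 //; field.
Qed.

Section TwoVariable.
Variables (R : realFieldType) (al be ga de x y : R).

Local Notation J n j := (calJ al be ga de n j x y).
Local Notation P m k := (bigJ m al (2 * k%:R + be + ga + 1) ((-1) ^+ k * de) y).
Local Notation Q k := (bigJ k ga be (de / y) (x / y)).

Lemma rhoS k : y != 0 -> rho de k.+1 y = (y + (-1) ^+ k * de) * rho de k y.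
Proof.
move=> y_neq0; rewrite /rho /= uphalf_half -signr_odd.
by case: (odd k) => /=; rewrite !exprS ?expr0 ?expr1; field.
Qed.

Lemma calJ_addn (k m : nat) : J (k + m)%N k = P m k * rho de k y * Q k.
Proof. by rewrite /calJ lez_nat leq_addr /= /calJnat addKn. Qed.

Lemma calJ_N1 (n : int) : J n (-1) = 0.
Proof. by []. Qed.

Lemma bigJ_raise_k j k : bigJ j al (2 * k%:R + be + ga + 1 + 2) (- ((-1) ^+ k * de)) y = P j k.+1.
Proof. by congr bigJ; [rewrite -addn1 natrD; ring | rewrite exprS mulN1r mulNr]. Qed.

Lemma bigJ_lower_k j k : bigJ j al (2 * k.+1%:R + be + ga + 1 - 2) (- ((-1) ^+ k.+1 * de)) y = P j k.
Proof. by congr bigJ; [rewrite -addn1 natrD; ring | rewrite exprS mulN1r mulNr opprK]. Qed.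

Lemma calJ_muly k m : -1 < al -> -1 < be -> -1 < ga -> de != 1 -> de != -1 ->
  y * J (k + m)%N k = aT al be ga de (k + m) k * J ((k + m)%N%:Z + 1) k
    + bT al be ga de (k + m) k * J (k + m)%N k
    + cT al be ga de (k + m) k * J ((k + m)%N%:Z - 1) k.
Proof.
move=> al_gt be_gt ga_gt de_neq1 de_neqN1.
have k_ge0 := ler0n R k.
have b_gt : -1 < 2 * k%:R + be + ga + 1 by lra.
have [cP _ c2] := sign_c_neq0 k de_neq1 de_neqN1.
have := bigJ_rec y m al_gt b_gt c2 cP.
rewrite /bT aT_recA // cT_recC // PoszS1 -addnS !calJ_addn.
case: m => [|m] rec.
  by rewrite rec_C0 mul0r addr0 in rec *; rewrite !mulrA rec; ring.
by rewrite addnS PoszSB1 calJ_addn !mulrA rec; ring.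
Qed.

Lemma calJ_raise k m : -1 < al -> -1 < be -> -1 < ga -> de != 1 -> de != -1 ->
  sigmaT be ga k * (P m k * rho de k.+1 y * Q k.+1) =
    gT al be ga de (k + m) k * J ((k + m)%N%:Z + 1) (k%:Z + 1)
    + tT al be ga de (k + m) k * J (k + m)%N (k%:Z + 1)
    + wT al be ga de (k + m) k * J ((k + m)%N%:Z - 1) (k%:Z + 1).
Proof.
move=> al_gt be_gt ga_gt de_neq1 de_neqN1.
have k_ge0 := ler0n R k.
have b_gt : -1 < 2 * k%:R + be + ga + 1 by lra.
have [cP cN c2] := sign_c_neq0 k de_neq1 de_neqN1.
have [dP dN _] := sign_c_neq0 0 de_neq1 de_neqN1; rewrite expr0 mul1r in dP dN.
have := bigJ_connection y m al_gt b_gt c2 cP cN.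
rewrite !bigJ_raise_k gT_connG // tT_connT // wT_connW // !PoszS1 -addSn calJ_addn.
case: m => [|[|m]] conn.
- by rewrite conn_T0 conn_W0 in conn *; rewrite conn; ring.
- by rewrite conn_W1 in conn *; rewrite -addSnnS calJ_addn conn; ring.
- rewrite -[(k + m.+2)%N]addSnnS calJ_addn addnS PoszSB1 calJ_addn conn /=; ring.
Qed.

Lemma tauT0 : tauT be ga 0 = 0.
Proof. by rewrite /tauT /phi /= mulr0 addr0 mul0r. Qed.

Lemma calJ_lower k m : -1 < al -> -1 < be -> -1 < ga -> de != 1 -> de != -1 -> y != 0 ->
  tauT be ga k * (y - (-1) ^+ k * de) * (P m k * rho de k y * Q k.-1) =
    eT al be ga de (k + m) k * J ((k + m)%N%:Z + 1) (k%:Z - 1)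
    + rT al be ga de (k + m) k * J (k + m)%N (k%:Z - 1)
    + uT al be ga de (k + m) k * J ((k + m)%N%:Z - 1) (k%:Z - 1).
Proof.
move=> al_gt be_gt ga_gt de_neq1 de_neqN1 y_neq0.
case: k => [|j]; first by rewrite tauT0 !mul0r !calJ_N1 !mulr0 !addr0.
have j_ge0 := ler0n R j.
have b_gt : 1 < 2 * j.+1%:R + be + ga + 1 by lra.
have [cP cN c2] := sign_c_neq0 j.+1 de_neq1 de_neqN1.
have := bigJ_mul_sqr y m al_gt b_gt c2 cP cN.
rewrite !bigJ_lower_k eT_sqrE // rT_sqrR // uT_sqrU //.
rewrite !PoszSB1 PoszS1 -addnS !addSnnS !calJ_addn rhoS //=.
have -> : y + (-1) ^+ j * de = y - (-1) ^+ j.+1 * de by rewrite exprS mulN1r mulNr opprK.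
set c := (-1) ^+ j.+1 * de => sq.
transitivity (tauT be ga j.+1 * ((y - c) ^+ 2 * P m j.+1) * rho de j y * Q j); first by ring.
by rewrite sq; ring.
Qed.

Lemma calJ_mulx k m : -1 < be -> -1 < ga -> y != 0 -> y ^+ 2 != de ^+ 2 ->
  x * J (k + m)%N k = sigmaT be ga k * (P m k * rho de k.+1 y * Q k.+1)
    + ((1 - sigmaT be ga k - tauT be ga k) * (y * J (k + m)%N k)
       - (-1) ^+ k * de * (sigmaT be ga k - tauT be ga k) * J (k + m)%N k)
    + tauT be ga k * (y - (-1) ^+ k * de) * (P m k * rho de k y * Q k.-1).
Proof.
move=> be_gt ga_gt y_neq0 y2_neq.
have [yP yN] := sign_y_neq0 k y2_neq.
have [q2 qP] := ratio_c_neq0 y_neq0 y2_neq.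
have sE : sigmaT be ga k = rec_A ga be (de / y) k * y / (y + (-1) ^+ k * de).
  by rewrite sigmaT_recA //; field.
have tE : tauT be ga k = rec_C ga be (de / y) k * y / (y - (-1) ^+ k * de).
  by rewrite tauT_recC //; field.
rewrite calJ_addn rhoS // sE tE.
transitivity (P m k * rho de k y * y * (x / y * Q k)); first by field.
by rewrite bigJ_rec //; field; nonzero.
Qed.

End TwoVariable.

Theorem proposition3p2 (R : realFieldType) (alpha beta gamma delta : R) :
  -1 < alpha -> -1 < beta -> -1 < gamma -> delta != 1 -> delta != -1 ->
  forall (n k : nat), (k <= n)%N ->
  forall x y : R, y != 0 -> y ^+ 2 != delta ^+ 2 ->
  let J := fun (m j : int) => calJ alpha beta gamma delta m j x y in
  let n' := n%:Z in let k' := k%:Z in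
  y * J n' k' =
    aT alpha beta gamma delta n k * J (n' + 1) k'
    + bT alpha beta gamma delta n k * J n' k'
    + cT alpha beta gamma delta n k * J (n' - 1) k'
  /\
  x * J n' k' =
    eT alpha beta gamma delta n k * J (n' + 1) (k' - 1)
    + fT alpha beta gamma delta n k * J (n' + 1) k'
    + gT alpha beta gamma delta n k * J (n' + 1) (k' + 1)
    + rT alpha beta gamma delta n k * J n' (k' - 1)
    + sT alpha beta gamma delta n k * J n' k'
    + tT alpha beta gamma delta n k * J n' (k' + 1)
    + uT alpha beta gamma delta n k * J (n' - 1) (k' - 1)
    + vT alpha beta gamma delta n k * J (n' - 1) k'
    + wT alpha beta gamma delta n k * J (n' - 1) (k' + 1).
Proof.
move=> al_gt be_gt ga_gt de_neq1 de_neqN1 n k kn x y y_neq0 y2_neq J n' k'.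
rewrite {}/J {}/n' {}/k'.
have [m ->] : exists m, n = (k + m)%N by exists (n - k)%N; rewrite subnKC.
have muly := calJ_muly x y k m al_gt be_gt ga_gt de_neq1 de_neqN1.
split; first exact: muly.
rewrite calJ_mulx // muly calJ_raise // calJ_lower // /fT /sT /vT /dlt.
ring.
Qed.
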